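(* There is a deterministic distributed algorithm in the LOCAL model that, on any $n$-vertex graph $G=(V,E)$ with maximum degree $\Delta$ and distinct vertex IDs in $\{1,\dots,n\}$, runs in $\log^* n+O(1)$ rounds and computes for every vertex $v$ a set $S_v\subseteq\{1,\dots,m\}$ with $m=O(\Delta^2)$ and $|S_v|\ge\Delta$, such that $S_u\cap S_v=\emptyset$ for every edge $\{u,v\}\in E$. In particular every choice of one color from each $S_v$ is a proper $O(\Delta^2)$-coloring, the solution domain has size at least $\Delta$, and the contingency factor is $O(\Delta)$.
   Context: LOCAL model: synchronous rounds, in each round every vertex can send messages of unbounded size to its neighbors; running time is the number of rounds. Solution domain size $=\min_v|S_v|$; contingency factor $=m/\min_v|S_v|$. *)

From mathcomp Require Import all_boot.
Set Implicit Arguments. Unset Strict Implicit. Unset Printing Implicit Defensive.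

Fixpoint tower (k : nat) : nat :=
  match k with 0 => 1 | k'.+1 => 2 ^ tower k' end.

(* log* n = least k such that k-fold iterated log_2 of n is <= 1,
   i.e. least k with n <= tower k (tower k >= k+1, so k <= n). *)
Definition log_star (n : nat) : nat :=
  find (fun k => n <= tower k) (iota 0 n.+1).

(* A deterministic algorithm in the LOCAL model (full-information form):
   each vertex holds a state of arbitrary type (unbounded message size);
   the initial state depends only on the vertex's ID; in each round every
   vertex sends its whole state to all neighbours and updates its state from
   its own state and the set of states received from its neighbours.  After
   [rounds] rounds each vertex outputs a finite list of natural numbers,
   read as the set S_v. *)
Record LocalAlg := {
  St : Type;
  init : nat -> St;
  step : St -> (St -> Prop) -> St;
  out : St -> seq nat;
  rounds : nat }.

Fixpoint run (A : LocalAlg) (n : nat) (e : rel 'I_n) (id : 'I_n -> nat)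
    (t : nat) (v : 'I_n) : St A :=
  match t with
  | 0 => @init A (id v)
  | t'.+1 => @step A (run A e id t' v)
                 (fun s => exists u, e v u /\ run A e id t' u = s)
  end.

Definition output (A : LocalAlg) (n : nat) (e : rel 'I_n) (id : 'I_n -> nat)
    (v : 'I_n) : seq nat :=
  @out A (run A e id (rounds A) v).

Definition maxdeg (n : nat) (e : rel 'I_n) : nat :=
  \max_(v : 'I_n) #|[pred u | e v u]|.

(* Over a field of order q, the graphs
   {(x, p x)} of the q^(d+1) polynomials of degree at most d are q-subsets of
   F x F, i.e. of [0, q^2), and two of them share at most d points.  If the
   current colouring is proper with fewer than q^(d+1) colours, a vertex keeps
   the points of its own set that lie in none of the sets of its at most D
   neighbours: at least q - D d > D points survive, and the surviving sets of
   adjacent vertices are disjoint.  The first survivor is the new colour, so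
   b-bit colours become O(log D + log b)-bit colours; after log* n rounds
   b = O(log D), and one more round with d = 4 and q = O(D) leaves every vertex
   more than D surviving points in a palette of size q^2 = O(D^2). *)

From mathcomp Require Import all_boot all_algebra all_field zify.
From mathcomp Require Import boolp.
Set Implicit Arguments. Unset Strict Implicit. Unset Printing Implicit Defensive.
Import GRing.Theory.

Record overlap_family (q d : nat) (S : nat -> seq nat) : Prop := OverlapFamily {
  family_uniq : forall c, c < q ^ d.+1 -> uniq (S c);
  family_size : forall c, c < q ^ d.+1 -> size (S c) = q;
  family_lt : forall c x, c < q ^ d.+1 -> x \in S c -> x < q * q;
  family_overlap : forall c c', c < q ^ d.+1 -> c' < q ^ d.+1 -> c != c' ->
    count (mem (S c')) (S c) <= d }.

Lemma count_root_lt_size (F : finIdomainType) (p : {poly F}) :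
  p != 0%R -> count (root p) (enum F) < size p.
Proof.
move=> p_neq0; rewrite -size_filter max_poly_roots //.
- by apply/allP => x; rewrite mem_filter => /andP[].
- by rewrite filter_uniq ?enum_uniq.
Qed.

Section PolynomialGraphs.
Variables (F : finFieldType) (d : nat).
Local Notation q := #|F|.

Definition index_poly (c : nat) : {poly F} := val (nth 0%R (enum {poly_d.+1 F}) c).

Definition poly_graph (c : nat) : seq nat :=
  [seq val (enum_rank (x, (index_poly c).[x])%R) | x <- enum F].

Lemma index_poly_inj c c' : c < q ^ d.+1 -> c' < q ^ d.+1 ->
  index_poly c = index_poly c' -> c = c'.
Proof.
have size_enum : size (enum {poly_d.+1 F}) = q ^ d.+1 by rewrite -cardE card_npoly.
move=> lt_c lt_c' /val_inj eq_cc'; apply/eqP.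
by rewrite -(nth_uniq 0%R _ _ (enum_uniq {poly_d.+1 F})) ?size_enum ?eq_cc'.
Qed.

Lemma mem_poly_graph c c' x :
  val (enum_rank (x, (index_poly c).[x])%R) \in poly_graph c' ->
  ((index_poly c).[x] = (index_poly c').[x])%R.
Proof. by case/mapP=> y _ /val_inj/enum_rank_inj[<-]. Qed.

Lemma poly_graph_family : overlap_family q d poly_graph.
Proof.
split=> [c _ | c _ | c x _ | c c' lt_c lt_c' neq_cc'].
- by rewrite map_inj_uniq ?enum_uniq // => x y /val_inj/enum_rank_inj[].
- by rewrite size_map -cardT.
- by case/mapP=> y _ ->; rewrite -card_prod ltn_ord.
pose p := (index_poly c - index_poly c')%R.
have p_neq0 : p != 0%R.
  by rewrite subr_eq0; apply: contra neq_cc' => /eqP/index_poly_inj-> //.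
have size_p : size p <= d.+1.
  by rewrite (leq_trans (size_polyD _ _)) // size_polyN geq_max !size_npoly.
rewrite count_map -ltnS (leq_trans _ size_p) //.
apply: leq_ltn_trans (count_root_lt_size p_neq0).
by apply: sub_count => x /mem_poly_graph eq_x; rewrite /root !hornerE eq_x subrr.
Qed.

End PolynomialGraphs.

Lemma overlap_family_exists p k d :
  prime p -> {S : nat -> seq nat | overlap_family (p ^ k) d S}.
Proof.
case: k => [|k] p_prime.
  exists (fun=> [:: 0]); split=> [||c x|c c'] //; rewrite expn0 exp1n.
    by rewrite inE => _ /eqP->.
  by rewrite !ltnS !leqn0 => /eqP-> /eqP->.
have [F _ card_F] := pPrimePowerField p_prime (ltn0Sn k).
by exists (poly_graph F d); rewrite -card_F; apply: poly_graph_family.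
Qed.

Lemma ltn_tower k : k < tower k.
Proof. by elim: k => //= k IHk; exact: leq_ltn_trans IHk (ltn_expl _ _). Qed.

Lemma leq_tower_log_star n : n <= tower (log_star n).
Proof.
have has_tower : has (fun k => n <= tower k) (iota 0 n.+1).
  by apply/hasP; exists n; [rewrite mem_iota; lia | exact: ltnW (ltn_tower n)].
have := nth_find 0 has_tower; rewrite has_find size_iota in has_tower.
by rewrite nth_iota.
Qed.

Section RoundParameters.
Variable D : nat.

(* A colouring by b-bit colours is reduced with q = 2 ^ field_exp b and
   d = poly_deg b.  Taking d = b shrinks long colours to O(log b + ell) bits;
   once b = O(ell), the constant degree 4 keeps q = O(D). *)

Definition ell := (trunc_log 2 D).+1.
Definition short_len b := b <= 4 * (ell + 3).
Definition field_exp b := if short_len b then ell + 3 else ell + (trunc_log 2 b).+1.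
Definition poly_deg b := if short_len b then 4 else b.
Definition next_len b := 2 * field_exp b.

Lemma ltn_exp_ell : D < 2 ^ ell.
Proof. exact: trunc_log_ltn. Qed.

Lemma exp_ell_le_double : 0 < D -> 2 ^ ell <= D.*2.
Proof. by move=> D_gt0; rewrite expnS mul2n leq_double trunc_logP. Qed.

Lemma degree_fits b : D * (poly_deg b).+1 < 2 ^ field_exp b.
Proof.
have := ltn_exp_ell; rewrite /poly_deg /field_exp; case: ifP => _; rewrite expnD.
  by move: (2 ^ ell) => X; rewrite [2 ^ 3]/=; lia.
have := trunc_log_ltn b (isT : 1 < 2).
by move: (2 ^ (trunc_log 2 b).+1) (2 ^ ell) => Y X; nia.
Qed.

Lemma length_fits b : 2 ^ b <= (2 ^ field_exp b) ^ (poly_deg b).+1.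
Proof.
rewrite -expnM leq_exp2l // /poly_deg /field_exp /short_len.
by case: ifP => [|_]; lia.
Qed.

Lemma next_len_tower j b : b <= 4 * tower j.+1 + 2 * ell + 6 ->
  next_len b <= 4 * tower j + 2 * ell + 6.
Proof.
rewrite /next_len /field_exp /short_len; case: ifP => [_|/negbT]; first lia.
rewrite -ltnNge /= => long_b le_b.
have b_lt : b < 2 ^ (tower j + 3).
  by rewrite expnD; move: le_b; move: (2 ^ tower j) => X; rewrite [2 ^ 3]/=; lia.
have : 2 ^ trunc_log 2 b < 2 ^ (tower j + 3).
  by apply: leq_ltn_trans b_lt; apply: trunc_logP; lia.
rewrite ltn_exp2l //; lia.
Qed.

Lemma iter_next_len n r : r <= log_star n ->
  iter r next_len n <= 4 * tower (log_star n - r) + 2 * ell + 6.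
Proof.
elim: r => [_|r IHr lt_r]; first by rewrite subn0 /=; have := leq_tower_log_star n; lia.
by apply: next_len_tower; rewrite -subSn // subSS IHr // ltnW.
Qed.

Lemma field_exp_log_star n : field_exp (iter (log_star n) next_len n) = ell + 3.
Proof.
have := iter_next_len (leqnn (log_star n)); rewrite subnn /= => le_len.
by rewrite /field_exp /short_len ifT //; lia.
Qed.

End RoundParameters.

Lemma count_exists_le_sum (T : Type) (I : finType) (P : pred I) (f : I -> pred T) s :
  count (fun x => [exists i, P i && f i x]) s <= \sum_(i | P i) count (f i) s.
Proof.
elim: s => [|x s IHs] /=; first by rewrite big1.
rewrite big_split /= leq_add //.
case: existsP => // -[i /andP[Pi fi_x]].
by rewrite (bigD1 i) //= fi_x.
Qed.

Section ColorReduction.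
Variables (T : finType) (e : rel T) (S : nat -> seq nat) (col : T -> nat).

Definition free_colors v :=
  [seq x <- S (col v) | ~~ [exists u, e v u && (x \in S (col u))]].

Lemma free_colors_disjoint u v x : symmetric e -> e u v ->
  x \in free_colors u -> x \notin free_colors v.
Proof.
move=> e_sym e_uv; rewrite !mem_filter => /andP[_ x_Su].
by rewrite negb_and negbK; apply/orP; left; apply/existsP; exists u; rewrite e_sym e_uv.
Qed.

Variables (q d D : nat).
Hypotheses (S_family : overlap_family q d S) (col_lt : forall v, col v < q ^ d.+1).

Lemma free_colors_uniq v : uniq (free_colors v).
Proof. exact/filter_uniq/(family_uniq S_family). Qed.

Lemma free_colors_lt v x : x \in free_colors v -> x < q * q.
Proof. by rewrite mem_filter => /andP[_]; apply: (family_lt S_family). Qed.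

Hypotheses (col_proper : forall u v, e u v -> col u != col v)
  (deg_e : forall v, #|[pred u | e v u]| <= D).

Lemma size_free_colors v : q <= size (free_colors v) + D * d.
Proof.
set s := S (col v); pose taken x := [exists u, e v u && (x \in S (col u))].
have -> : q = count taken s + size (free_colors v).
  by rewrite size_filter count_predC (family_size S_family).
rewrite addnC leq_add2l (leq_trans (count_exists_le_sum _ _ _)) //.
rewrite (@leq_trans (\sum_(u | e v u) d)) //.
  by apply: leq_sum => u e_vu; apply: (family_overlap S_family) => //; apply: col_proper.
by rewrite sum_nat_const leq_mul2r deg_e orbT.
Qed.

Lemma ltn_size_free_colors v : D * d.+1 < q -> D < size (free_colors v).
Proof. by have := size_free_colors v; rewrite mulnS; lia. Qed.

End ColorReduction.

Record state := State { st_round : nat; st_color : nat; st_out : seq nat }.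

Section Linial.
Variables (n D : nat).

Definition color_len r := iter r (next_len D) n.

Definition round_family r : nat -> seq nat :=
  sval (@overlap_family_exists 2 (field_exp D (color_len r)) (poly_deg D (color_len r)) isT).

(* A vertex sees its neighbourhood only as a predicate on states, so the
   filter decides it classically.  IDs 1..n give the initial colours
   0..n-1 < 2 ^ n, and output colours are shifted up by one. *)
Definition linial_step (s : state) (N : state -> Prop) : state :=
  let S := round_family (st_round s) in
  let free := [seq x <- S (st_color s) | ~~ `[< exists2 s', N s' & x \in S (st_color s') >]] in
  State (st_round s).+1 (head 0 free) (map succn (take D free)).

Definition linial : LocalAlg :=
  {| St := state; init := fun i => State 0 i.-1 [::]; step := linial_step;
     out := st_out; rounds := (log_star n).+1 |}.

Lemma round_family_spec t :
  overlap_family (2 ^ field_exp D (color_len t)) (poly_deg D (color_len t)) (round_family t).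
Proof. exact: svalP. Qed.

Variables (e : rel 'I_n) (id : 'I_n -> nat).
Hypotheses (e_sym : symmetric e) (e_irr : irreflexive e) (deg_e : maxdeg e <= D)
  (id_inj : injective id) (id_range : forall v, 1 <= id v <= n).

Local Notation run_linial := (run linial e id).
Definition linial_color t v := st_color (run_linial t v).
Local Notation free t := (free_colors e (round_family t) (linial_color t)).

Lemma run_linial_round t v : st_round (run_linial t v) = t.
Proof. by elim: t v => //= t IHt v; rewrite IHt. Qed.

Lemma run_linialS t v :
  run_linial t.+1 v = State t.+1 (head 0 (free t v)) (map succn (take D (free t v))).
Proof.
rewrite /= /linial_step run_linial_round; set G := filter _ _.
suff -> : G = free t v by [].
apply: eq_filter => x; congr negb; apply/asboolP/existsP.
  by case=> _ [u [e_vu <-]] x_in; exists u; rewrite e_vu.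
by case=> u /andP[e_vu x_in]; exists (run_linial t u) => //; exists u.
Qed.

Definition proper_below t :=
  (forall v, linial_color t v < 2 ^ color_len t) /\
  (forall u v, e u v -> linial_color t u != linial_color t v).

Lemma proper_below0 : proper_below 0.
Proof.
split=> [v | u v e_uv]; rewrite /linial_color /=.
  by have := id_range v; have := ltn_expl n (isT : 1 < 2); lia.
apply: contraTneq e_uv => eq_pred_id.
have /id_inj -> : id u = id v by have := id_range u; have := id_range v; lia.
by rewrite e_irr.
Qed.

Lemma card_neighbours_le v : #|[pred u | e v u]| <= D.
Proof. exact: leq_trans (leq_bigmax v) deg_e. Qed.

Section Round.
Variable t : nat.
Hypothesis proper_t : proper_below t.

Lemma linial_color_lt v :
  linial_color t v < (2 ^ field_exp D (color_len t)) ^ (poly_deg D (color_len t)).+1.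
Proof. exact: leq_trans (proj1 proper_t v) (length_fits _ _). Qed.

Lemma ltn_size_linial_free v : D < size (free t v).
Proof.
exact: ltn_size_free_colors (round_family_spec t) linial_color_lt (proj2 proper_t)
  card_neighbours_le v (degree_fits _ _).
Qed.

Lemma linial_free_lt v x : x \in free t v -> x < 2 ^ color_len t.+1.
Proof.
by move/(free_colors_lt (round_family_spec t) linial_color_lt); rewrite -expnD addnn -mul2n.
Qed.

Lemma proper_belowS : proper_below t.+1.
Proof.
have head_free v : linial_color t.+1 v \in free t v.
  rewrite /linial_color run_linialS /=; have := ltn_size_linial_free v.
  by case: (free t v) => //= x s _; rewrite mem_head.
split=> [v | u v e_uv]; first exact: linial_free_lt (head_free v).
apply: contraTneq (head_free v) => <-.
exact: free_colors_disjoint e_sym e_uv (head_free u).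
Qed.

End Round.

Lemma proper_below_all t : proper_below t.
Proof. by elim: t => [|t]; [apply: proper_below0 | apply: proper_belowS]. Qed.

Lemma linial_outputE v : output linial e id v = map succn (take D (free (log_star n) v)).
Proof. by rewrite /output [rounds _]/= run_linialS. Qed.

Lemma linial_output_range v x : x \in output linial e id v -> 1 <= x <= 256 * D ^ 2.
Proof.
rewrite linial_outputE => /mapP[y y_in ->].
have D_gt0 : 0 < D by move: y_in; case: (posnP D) => [->|//]; rewrite take0.
have := linial_free_lt (proper_below_all _) (mem_take y_in).
have -> : color_len (log_star n).+1 = 2 * (ell D + 3).
  by rewrite /color_len iterS /next_len field_exp_log_star.
have -> : 2 ^ (2 * (ell D + 3)) = 64 * (2 ^ ell D) ^ 2.
  by rewrite -expnM -[64]/(2 ^ 6) -expnD; congr (2 ^ _); lia.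
have := exp_ell_le_double D_gt0; move: (2 ^ ell D) => X; nia.
Qed.

Lemma size_undup_linial_output v : size (undup (output linial e id v)) = D.
Proof.
have D_lt := ltn_size_linial_free (proper_below_all (log_star n)) v.
rewrite linial_outputE undup_id ?size_map ?size_takel ?(ltnW D_lt) //.
rewrite (map_inj_uniq succn_inj) take_uniq //.
exact: free_colors_uniq (round_family_spec _) (linial_color_lt (proper_below_all _)) v.
Qed.

Lemma linial_output_disjoint u v x : e u v ->
  x \in output linial e id u -> x \notin output linial e id v.
Proof.
rewrite !linial_outputE => e_uv /mapP[y /mem_take y_u ->].
rewrite (mem_map succn_inj); apply: contra (free_colors_disjoint e_sym e_uv y_u).
exact: mem_take.
Qed.

End Linial.

Theorem mainTheorem7 :
  exists C c : nat, forall n Delta : nat,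
    exists (A : LocalAlg) (m : nat),
      m <= c * Delta ^ 2 /\
      rounds A <= log_star n + C /\
      forall (e : rel 'I_n) (id : 'I_n -> nat),
        symmetric e -> irreflexive e -> maxdeg e = Delta ->
        injective id -> (forall v, 1 <= id v <= n) ->
        (forall v x, x \in output A e id v -> 1 <= x <= m) /\
        (forall v, Delta <= size (undup (output A e id v))) /\
        (forall u v, e u v ->
           forall x, x \in output A e id u -> x \notin output A e id v).
Proof.
exists 1, 256 => n Delta; exists (linial n Delta), (256 * Delta ^ 2).
split=> //; split; first by rewrite addn1.
move=> e id e_sym e_irr /eq_leq deg_e id_inj id_range.
split; [|split].
- exact: linial_output_range e_sym e_irr deg_e id_inj id_range.
- by move=> v; rewrite (size_undup_linial_output e_sym e_irr deg_e id_inj id_range).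
- by move=> u v e_uv x; exact: (linial_output_disjoint e_sym e_uv).
Qed.
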